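(* Let $q=(V_q,E_q,L_q)$ be a query hypergraph, $H=(V_H,E_H,L_H)$ a data hypergraph, and $M:E_q\to E_H$ any map. Then $M$ is an embedding of $q$ in $H$ if and only if $Sig\big(\bigcap_{e\in S}e\big)=Sig\big(\bigcap_{e\in S}M(e)\big)$ for every non-empty subset $S\subseteq E_q$.
   Context: A (vertex-labeled) hypergraph is a triple $H=(V,E,L)$ where $V$ is a finite set, $E$ is a set of non-empty subsets of $V$ (hyperedges, no repeated hyperedges) with $\bigcup_{e\in E}e=V$, and $L:V\to\Sigma$ assigns each vertex a label. For $S\subseteq V$, $Sig(S)$ is the multiset of labels $\{L(v)\mid v\in S\}$ (with multiplicity). A map $M:E_q\to E_H$ is an embedding of $q$ in $H$ if there exists an injective map $\phi:V_q\to V_H$ with $L_H(\phi(u))=L_q(u)$ for all $u\in V_q$ and $\{\phi(u):u\in e\}=M(e)$ for every $e\in E_q$. *)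

From mathcomp Require Import all_boot.
Set Implicit Arguments. Unset Strict Implicit. Unset Printing Implicit Defensive.

(* A vertex-labeled hypergraph: the vertex set is the whole finite type V,
   hyperedges form a set E of non-empty subsets of V covering V
   (no repeated hyperedges since E is a set), L labels vertices. *)
Record hypergraph (Sigma : eqType) := Hypergraph {
  hvert : finType;
  hedges : {set {set hvert}};
  hlab : hvert -> Sigma;
  hedges_nonempty : forall e, e \in hedges -> e != set0;
  hedges_cover : \bigcup_(e in hedges) e = [set: hvert]
}.

Arguments hvert {Sigma} h.
Arguments hedges {Sigma} h.
Arguments hlab {Sigma} h _.

(* Sig(S) as a multiset of labels, represented by its multiplicity function. *)
Definition Sig (Sigma : eqType) (V : finType) (L : V -> Sigma) (S : {set V})
  : Sigma -> nat := fun a => #|[set v in S | L v == a]|.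

Definition is_embedding (Sigma : eqType) (q H : hypergraph Sigma)
  (M : {set hvert q} -> {set hvert H}) : Prop :=
  exists phi : hvert q -> hvert H,
    [/\ injective phi,
        (forall u, hlab H (phi u) = hlab q u) &
        (forall e, e \in hedges q -> phi @: e = M e)].

From mathcomp Require Import all_boot.
Set Implicit Arguments. Unset Strict Implicit. Unset Printing Implicit Defensive.

(* Give each query vertex u the type {e in E_q | u \in e} and each data vertex v
   the type {e in E_q | v \in M e}.  For a non-empty T, Sig (\bigcap_(e in T) e)
   counts the vertices of each label whose type contains T.  Peeling off the
   hyperedges outside T one at a time (inclusion-exclusion without signs), these
   counts determine, for every label and non-empty T, the number of vertices whose
   type is exactly T; so the signature condition makes these fibres equinumerous
   on both sides.  Every query vertex has a non-empty type because the hyperedges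
   cover V_q, hence matching the fibres gives an injective, label- and
   type-preserving phi, and type preservation plus equal fibre sizes yield
   phi @: e = M e.  Conversely an injective phi commutes with intersections. *)

Lemma imset_bigcap (I aT rT : finType) (f : aT -> rT) (S : {set I})
    (A : I -> {set aT}) :
  injective f -> S != set0 ->
  f @: (\bigcap_(i in S) A i) = \bigcap_(i in S) (f @: A i).
Proof.
move=> injf /set0Pn[j jS]; apply/setP => y; apply/imsetP/bigcapP.
  by case=> x /bigcapP xA -> i iS; rewrite imset_f ?xA.
move=> yA; have /imsetP[x _ yE] := yA j jS; exists x => //.
by apply/bigcapP => i /yA; rewrite yE mem_imset.
Qed.

Lemma card_label_imset (Sigma : eqType) (aT rT : finType) (f : aT -> rT)
    (La : aT -> Sigma) (Lr : rT -> Sigma) (D : {set aT}) (a : Sigma) :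
  injective f -> (forall x, Lr (f x) = La x) ->
  #|[set y in f @: D | Lr y == a]| = #|[set x in D | La x == a]|.
Proof.
move=> injf fL; rewrite -(card_imset _ injf); apply: eq_card => y.
rewrite inE; apply/andP/imsetP => [[/imsetP[x xD ->]]|[x /setIdP[xD xa] ->]].
  by rewrite fL => xa; exists x; rewrite // inE xD.
by rewrite fL xa imset_f.
Qed.

Lemma fiber_injection (K : eqType) (A B : finType) (kA : A -> K) (kB : B -> K) :
  (forall x, #|[set y | kA y == kA x]| <= #|[set z | kB z == kA x]|) ->
  exists2 f : A -> B, injective f & forall x, kB (f x) = kA x.
Proof.
move=> le_fib.
pose sA k := enum [pred y | kA y == k]; pose sB k := enum [pred z | kB z == k].
have idx_lt x : index x (sA (kA x)) < size (sB (kA x)).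
  rewrite /sB -cardE -cardsE; apply: leq_trans (le_fib x).
  by rewrite cardsE cardE index_mem mem_enum inE.
have ex_b x : exists z, kB z == kA x.
  have /card_gt0P[z] : 0 < #|[pred z | kB z == kA x]|.
    by rewrite cardE (leq_ltn_trans _ (idx_lt x)).
  by exists z.
(* x goes to the element of rank (rank of x in its fibre) in the kB-fibre;
   the default of [nth] is never reached. *)
pose f x := nth (xchoose (ex_b x)) (sB (kA x)) (index x (sA (kA x))).
have kf x : kB (f x) = kA x.
  by have := mem_nth (xchoose (ex_b x)) (idx_lt x); rewrite mem_enum => /eqP.
have idx_f x : index (f x) (sB (kA x)) = index x (sA (kA x)).
  by rewrite index_uniq ?enum_uniq ?idx_lt.
have inA z : z \in sA (kA z) by rewrite mem_enum inE.
exists f => // x y fxy; have kxy : kA x = kA y by rewrite -!kf fxy.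
by rewrite -(nth_index x (inA x)) -(nth_index x (inA y)) -!idx_f fxy kxy.
Qed.

Lemma fiber_injection_onto (K : eqType) (A B : finType) (kA : A -> K)
    (kB : B -> K) (f : A -> B) :
  injective f -> (forall x, kB (f x) = kA x) ->
  forall y, #|[set x | kA x == kB y]| = #|[set z | kB z == kB y]| ->
  exists x, f x = y.
Proof.
move=> injf kf y eq_fib.
have : f @: [set x | kA x == kB y] == [set z | kB z == kB y].
  rewrite eqEcard card_imset // eq_fib leqnn andbT.
  by apply/subsetP => z /imsetP[x]; rewrite !inE => xy ->; rewrite kf.
by move/eqP/setP/(_ y); rewrite inE eqxx => /imsetP[x _ ->]; exists x.
Qed.

Section TypeCounting.

Variables (E V : finType) (typ : V -> {set E}) (A : {set V}).

Definition ntype_between (T X : {set E}) : nat :=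
  #|[set v in A | (T \subset typ v) && [disjoint X & typ v]]|.

Lemma ntype_between_split (T X : {set E}) x : x \in X ->
  ntype_between (x |: T) (X :\ x) + ntype_between T X = ntype_between T (X :\ x).
Proof.
move=> xX; rewrite /ntype_between -[RHS](cardsID [set v | x \in typ v]).
have disjX (B : {set E}) : [disjoint X & B] = (x \notin B) && [disjoint X :\ x & B].
  by rewrite -[in LHS](setD1K xX) !disjoints_subset subUset sub1set inE.
congr (_ + _); apply: eq_card => v; rewrite !inE ?subUset ?sub1set ?disjX;
by case: (x \in typ v); rewrite ?andbT ?andbF.
Qed.

Lemma ntype_exact (D T : {set E}) : (forall v, typ v \subset D) ->
  #|[set v in A | typ v == T]| = ntype_between T (D :\: T).
Proof.
move=> typD; apply: eq_card => v; rewrite !inE; congr (_ && _).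
rewrite eqEsubset andbC; congr (_ && _); rewrite disjoint_sym disjoints_subset.
apply/idP/idP => sub.
  by apply: subset_trans sub _; apply/subsetP => e eT; rewrite !inE eT.
apply/subsetP => e ev; move: (subsetP sub e ev).
by rewrite !inE (subsetP (typD v)) // andbT negbK.
Qed.

End TypeCounting.

Lemma ntype_between_eq (E V1 V2 : finType) (typ1 : V1 -> {set E}) (A1 : {set V1})
    (typ2 : V2 -> {set E}) (A2 : {set V2}) (D : {set E}) :
  (forall T : {set E}, T \subset D -> T != set0 ->
     ntype_between typ1 A1 T set0 = ntype_between typ2 A2 T set0) ->
  forall T X : {set E}, T \subset D -> X \subset D -> T != set0 ->
    ntype_between typ1 A1 T X = ntype_between typ2 A2 T X.
Proof.
move=> eq0 T X; have [n] := ubnP #|X|; elim: n T X => // n IH T X.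
rewrite ltnS => leXn TD XD T0; have [->|/set0Pn[x xX]] := eqVneq X set0.
  exact: eq0.
have ltXn : #|X :\ x| < n by rewrite (cardsD1 x X) xX in leXn.
have XxD : X :\ x \subset D by apply: subset_trans (subD1set X x) XD.
have xTD : x |: T \subset D by rewrite subUset sub1set (subsetP XD).
have xT0 : x |: T != set0 by apply/set0Pn; exists x; rewrite setU11.
apply: (@addnI (ntype_between typ2 A2 (x |: T) (X :\ x))).
by rewrite ntype_between_split // -IH // ntype_between_split // IH.
Qed.

Definition edge_type (E V : finType) (D : {set E}) (F : E -> {set V}) (v : V)
  : {set E} := [set e in D | v \in F e].

Lemma edge_type_sub (E V : finType) (D : {set E}) (F : E -> {set V}) (v : V) :
  edge_type D F v \subset D.
Proof. by apply/subsetP => e; rewrite inE => /andP[]. Qed.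

Lemma Sig_bigcap (Sigma : eqType) (E V : finType) (D : {set E})
    (F : E -> {set V}) (L : V -> Sigma) (T : {set E}) (a : Sigma) :
  T \subset D ->
  Sig L (\bigcap_(e in T) F e) a
  = ntype_between (edge_type D F) [set v | L v == a] T set0.
Proof.
move=> TD; apply: eq_card => v.
rewrite !inE disjoints_subset sub0set andbT andbC; congr (_ && _).
apply/bigcapP/subsetP => [vF e eT | sub e /sub].
  by rewrite inE (subsetP TD) ?vF.
by rewrite inE => /andP[].
Qed.

Lemma Sig_eq_of_embedding (Sigma : eqType) (q H : hypergraph Sigma)
    (M : {set hvert q} -> {set hvert H}) :
  is_embedding M ->
  forall S : {set {set hvert q}}, S \subset hedges q -> S != set0 ->
  forall a, Sig (hlab q) (\bigcap_(e in S) e) a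
            = Sig (hlab H) (\bigcap_(e in S) M e) a.
Proof.
case=> phi [injphi phiL phiM] S SE S0 a.
have -> : \bigcap_(e in S) M e = phi @: (\bigcap_(e in S) e).
  rewrite imset_bigcap //; apply: eq_bigr => e eS.
  by rewrite phiM // (subsetP SE).
by rewrite /Sig (card_label_imset _ _ injphi phiL).
Qed.

Lemma edge_type_neq0 (Sigma : eqType) (q : hypergraph Sigma) (u : hvert q) :
  edge_type (hedges q) id u != set0.
Proof.
have : u \in \bigcup_(e in hedges q) e by rewrite hedges_cover inE.
by case/bigcupP => e eE ue; apply/set0Pn; exists e; rewrite inE eE ue.
Qed.

Section EmbeddingOfSigEq.

Variables (Sigma : eqType) (q H : hypergraph Sigma).
Variable M : {set hvert q} -> {set hvert H}.

Hypothesis eqSig : forall S : {set {set hvert q}}, S \subset hedges q -> S != set0 ->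
  forall a, Sig (hlab q) (\bigcap_(e in S) e) a
            = Sig (hlab H) (\bigcap_(e in S) M e) a.

Local Notation typq := (edge_type (hedges q) id).
Local Notation typH := (edge_type (hedges q) M).
Local Notation kq u := (hlab q u, typq u).
Local Notation kH v := (hlab H v, typH v).

Lemma card_key_fiber_eq (a : Sigma) (T : {set {set hvert q}}) :
  T \subset hedges q -> T != set0 ->
  #|[set u | kq u == (a, T)]| = #|[set v | kH v == (a, T)]|.
Proof.
move=> TE T0.
have fiberE (V : finType) (L : V -> Sigma) (typ : V -> {set {set hvert q}}) :
    #|[set v | (L v, typ v) == (a, T)]|
    = #|[set v in [set v | L v == a] | typ v == T]|.
  by apply: eq_card => v; rewrite !inE xpair_eqE.
rewrite !fiberE !(ntype_exact _ _ (edge_type_sub _ _)).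
apply: (ntype_between_eq _ TE (subsetDl _ _) T0) => T' T'E T'0.
by rewrite -!Sig_bigcap //; apply: eqSig.
Qed.

Lemma embedding_of_Sig_eq : is_embedding M.
Proof.
have [phi injphi kphi] : exists2 phi : hvert q -> hvert H,
    injective phi & forall u, kH (phi u) = kq u.
  apply: (fiber_injection (kA := fun u => kq u) (kB := fun v => kH v)) => u.
  by rewrite card_key_fiber_eq ?edge_type_sub ?edge_type_neq0.
have phiT u : typH (phi u) = typq u by apply: (congr1 snd (kphi u)).
exists phi; split => [||e eE]; first exact: injphi.
  by move=> u; apply: (congr1 fst (kphi u)).
apply/setP => v; apply/imsetP/idP => [[u ue ->]|vMe].
  have : e \in typH (phi u) by rewrite phiT inE eE.
  by rewrite inE => /andP[].
have [u phiuv] : exists u, phi u = v.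
  apply: (fiber_injection_onto (kB := fun v => kH v) injphi kphi).
  rewrite card_key_fiber_eq ?edge_type_sub //.
  by apply/set0Pn; exists e; rewrite inE eE.
exists u; last by rewrite phiuv.
have : e \in typq u by rewrite -phiT phiuv inE eE.
by rewrite inE => /andP[].
Qed.

End EmbeddingOfSigEq.

Theorem theorem1 (Sigma : eqType) (q H : hypergraph Sigma)
  (M : {set hvert q} -> {set hvert H})
  (hM : forall e, e \in hedges q -> M e \in hedges H) :
  is_embedding M <->
  (forall S : {set {set hvert q}}, S \subset hedges q -> S != set0 ->
     forall a : Sigma,
       Sig (hlab q) (\bigcap_(e in S) e) a
       = Sig (hlab H) (\bigcap_(e in S) M e) a).
Proof.
by split; [apply: Sig_eq_of_embedding | apply: embedding_of_Sig_eq].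
Qed.
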